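(* Let $\Sigma$ be a finite set, $k>2$ an integer, and $n\ge 1$. For every sequence of sets $X_1,\ldots,X_n\subseteq\Sigma$, each of size $k$, with $|\Sigma|<(k-2)\log_2(n/3)$, there exist indices $1\le i<j\le n$ and sets $X_i',\ldots,X_j'$ such that for each $\ell\in\{i,\ldots,j\}$, $X_\ell'\subseteq X_\ell$ and $|X_\ell'|\ge 2$, and for each $a\in\Sigma$ the number of sets among $X_i',\ldots,X_j'$ that contain $a$ is even. *)

From mathcomp Require Export all_boot.
From Stdlib Require Export Reals.
Set Implicit Arguments. Unset Strict Implicit. Unset Printing Implicit Defensive.

Definition log2 (x : R) : R := (ln x / ln 2)%R.

(* Call an element shared in a block of consecutive sets if it lies in at least
   two of them.  If every set of a block has at least three shared elements, the
   block itself is a solution: each shared element occurring an odd number of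
   times is dropped from one of its sets, and since such an element occurs at
   least three times, Hall's theorem with capacity |shared part| - 2 on each set
   lets us do this while every set keeps two elements.  Otherwise some set X_l
   has at least k - 2 elements occurring nowhere else in the block; splitting the
   block at l then shrinks the union by k - 2 on both sides.  So a block without
   solution whose union has at most (k - 2) t + k - 1 elements has fewer than
   2^t sets, and t = |Sigma| / (k - 2) gives n < 2^t, which contradicts
   |Sigma| < (k - 2) log2 (n / 3). *)

(* Reals rebinds [^] in nat_scope to Nat.pow; re-importing ssrnat restores expn. *)
From mathcomp Require Import ssrnat zify.
From Stdlib Require Import Lra.
Set Implicit Arguments. Unset Strict Implicit. Unset Printing Implicit Defensive.

Section HallMarriage.
Variables (L R : finType).
Implicit Types (E : L -> R -> bool) (A : {set L}) (C : {set R}).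

Definition neighbours E A : {set R} := [set r | [exists x in A, E x r]].

Definition marriage_condition E A :=
  forall A', A' \subset A -> #|A'| <= #|neighbours E A'|.

Definition matching E A (f : L -> R) :=
  {in A &, injective f} /\ {in A, forall x, E x (f x)}.

Definition avoid E C x r := E x r && (r \notin C).

Lemma neighboursU E A1 A2 :
  neighbours E (A1 :|: A2) = neighbours E A1 :|: neighbours E A2.
Proof.
apply/setP=> r; rewrite !inE; apply/existsP/orP.
  by case=> x /andP[]; rewrite inE => /orP[] xA Exr; [left|right];
    apply/existsP; exists x; rewrite xA.
by case=> /existsP[x /andP[xA Exr]]; exists x; rewrite inE xA ?orbT.
Qed.

Lemma neighbours_avoid E C A : neighbours (avoid E C) A = neighbours E A :\: C.
Proof.
apply/setP=> r; rewrite !inE; apply/existsP/andP.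
  by case=> x /and3P[xA Exr rC]; split=> //; apply/existsP; exists x; rewrite xA.
by case=> rC /existsP[x /andP[xA Exr]]; exists x; rewrite xA /avoid Exr.
Qed.

Lemma mem_neighbours E A x r : x \in A -> E x r -> r \in neighbours E A.
Proof. by move=> xA Exr; rewrite inE; apply/existsP; exists x; rewrite xA. Qed.

Lemma matching_glue E A1 A2 C f1 f2 :
  matching E A1 f1 -> {in A1, forall x, f1 x \in C} ->
  matching (avoid E C) A2 f2 ->
  matching E (A1 :|: A2) (fun x => if x \in A1 then f1 x else f2 x).
Proof.
move=> [inj1 E1] f1C [inj2 E2]; split=> [x y | x].
  rewrite !inE; case xA1: (x \in A1); case yA1: (y \in A1) => //= xA yA.
  - exact: inj1.
  - by move=> e; move: (E2 y yA) (f1C x xA1); rewrite -e => /andP[_ /negbTE->].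
  - by move=> e; move: (E2 x xA) (f1C y yA1); rewrite e => /andP[_ /negbTE->].
  - exact: inj2.
by rewrite inE; case: (x \in A1) / boolP => //= [/E1 | _ /E2 /andP[]].
Qed.

Lemma marriage_condition_avoid_tight E A A' :
  marriage_condition E A -> A' \subset A -> #|neighbours E A'| <= #|A'| ->
  marriage_condition (avoid E (neighbours E A')) (A :\: A').
Proof.
move=> hall sA' tight A2 sA2; rewrite neighbours_avoid.
have dis : [disjoint A2 & A'].
  by rewrite disjoints_subset (subset_trans sA2) // setDE subsetIr.
have := hall (A2 :|: A'); rewrite subUset sA' (subset_trans sA2 (subsetDl _ _)).
rewrite cardsU (disjoint_setI0 dis) cards0 subn0 neighboursU.
have := cardsID (neighbours E A') (neighbours E A2).
rewrite cardsU; have := subset_leq_card (subsetIr (neighbours E A2) (neighbours E A')).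
have := subset_leq_card (subsetIl (neighbours E A2) (neighbours E A')).
lia.
Qed.

Lemma marriage_condition_avoid_surplus E A x y :
  (forall A', A' \proper A -> A' != set0 -> #|A'| < #|neighbours E A'|) ->
  x \in A -> marriage_condition (avoid E [set y]) (A :\ x).
Proof.
move=> surplus xA A' sA'; rewrite neighbours_avoid.
have [->|nzA'] := eqVneq A' set0; first by rewrite cards0.
have := surplus A' (sub_proper_trans sA' (properD1 xA)) nzA'.
by rewrite (cardsD1 y (neighbours E A')); case: (y \in _) => /=; lia.
Qed.

(* [r0] is only needed to build some function [L -> R] when [A] is empty. *)
Theorem hall_marriage (r0 : R) E A :
  marriage_condition E A -> exists f, matching E A f.
Proof.
have [m] := ubnP #|A|; elim: m A E => // m IH A E ltAm hall.
case: (pickP [pred A' : {set L} |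
  [&& A' \proper A, A' != set0 & #|neighbours E A'| <= #|A'|]]) =>
    [A' /and3P[pA' nzA' tight] | surplus].
  have sA' := proper_sub pA'.
  have [f1 match1] : exists f, matching E A' f.
    apply: IH => [|A2 sA2]; first exact: leq_trans (proper_card pA') _.
    exact/hall/(subset_trans sA2 sA').
  have [f2 match2] : exists f, matching (avoid E (neighbours E A')) (A :\: A') f.
    apply: IH; last exact: marriage_condition_avoid_tight.
    by move: ltAm nzA' (proper_card pA'); rewrite cardsDS // -card_gt0; lia.
  exists (fun x => if x \in A' then f1 x else f2 x).
  have -> : A = A' :|: (A :\: A').
    by rewrite setDE setUIr setUCr setIT (setUidPr sA').
  apply: (matching_glue match1) match2 => x xA'.
  exact: mem_neighbours xA' (match1.2 x xA').
have [->|[x xA]] := set_0Vmem A.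
  by exists (fun=> r0); split=> x; rewrite inE.
have [y Exy] : exists y, E x y.
  have := hall [set x]; rewrite sub1set cards1 card_gt0 => /(_ xA) /set0Pn[y].
  by rewrite inE => /existsP[x' /andP[]]; rewrite inE => /eqP->; exists y.
have [f2 match2] : exists f, matching (avoid E [set y]) (A :\ x) f.
  apply: IH; first by move: ltAm; rewrite (cardsD1 x A) xA.
  apply: marriage_condition_avoid_surplus xA => A' pA' nzA'.
  by rewrite ltnNge; apply/negbT; move: (surplus A'); rewrite /= pA' nzA'.
exists (fun z => if z \in [set x] then y else f2 z).
rewrite -(setD1K xA); apply: (matching_glue (f1 := fun=> y) _ _ match2) => [|z _].
  by split=> [z1 z2|z]; rewrite !inE => /eqP-> // /eqP->.
exact: set11.
Qed.

End HallMarriage.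

Lemma card_slots (R : finType) (M : nat) (S : {set R}) (cap : R -> nat) :
  (forall r, cap r <= M) ->
  #|[set p : R * 'I_M | (p.1 \in S) && (p.2 < cap p.1)]| = \sum_(r in S) cap r.
Proof.
move=> capM; rewrite -sum1dep_card.
rewrite -(pair_big_dep (mem S) (fun r (j : 'I_M) => j < cap r) (fun _ _ => 1)) /=.
apply: eq_bigr => r _.
by rewrite (big_ord_narrow (capM r)) sum1_card card_ord.
Qed.

Theorem hall_capacity (L R : finType) (r0 : R) (cap : R -> nat)
    (E : L -> R -> bool) (A : {set L}) :
  (forall A' : {set L}, A' \subset A -> #|A'| <= \sum_(r in neighbours E A') cap r) ->
  exists2 f : L -> R, {in A, forall x, E x (f x)} &
    forall r, #|[set x in A | f x == r]| <= cap r.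
Proof.
(* Split each [r] into [cap r] slots and match [A] injectively into the slots. *)
move=> hall; pose M := (\sum_r cap r).+1.
have capM r : cap r <= M by rewrite ltnW // ltnS (bigD1 r) //= leq_addr.
pose slot x (p : R * 'I_M) := E x p.1 && (p.2 < cap p.1).
have slotsN A' : neighbours slot A' =
    [set p : R * 'I_M | (p.1 \in neighbours E A') && (p.2 < cap p.1)].
  apply/setP=> p; rewrite !inE /slot; apply/existsP/andP.
    by case=> x /and3P[xA' Ex lt]; split=> //; apply/existsP; exists x; rewrite xA'.
  by case=> /existsP[x /andP[xA' Ex]] lt; exists x; rewrite xA' Ex.
have [|g [ginj gE]] := hall_marriage (r0, Ordinal (ltn0Sn _)) (E := slot) (A := A).
  by move=> A' sA'; rewrite slotsN card_slots // hall.
exists (fun x => (g x).1) => [x /gE /andP[] // | r].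
have := card_slots [set r] capM; rewrite big_set1 => <-.
rewrite -(@card_in_imset _ _ g) => [|x y /setIdP[xA _] /setIdP[yA _]]; last exact: ginj.
apply/subset_leq_card/subsetP=> _ /imsetP[x /setIdP[xA /eqP gxr] ->].
by rewrite !inE gxr eqxx; case/andP: (gE x xA) => _; rewrite gxr.
Qed.

Section SharedElements.
Variables (I T : finType) (X : I -> {set T}) (B : {set I}).

Definition occurrences c := [set l in B | c \in X l].
Definition shared c := 1 < #|occurrences c|.
Definition shared_part l := [set c in X l | shared c].
Definition private_part l := X l :\: \bigcup_(l' in B :\ l) X l'.
Definition odd_shared := [set c | shared c && odd #|occurrences c|].

Definition even_subfamily :=
  exists Y : I -> {set T},
    (forall l, l \in B -> Y l \subset X l /\ 2 <= #|Y l|) /\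
    forall c, ~~ odd #|[set l in B | c \in Y l]|.

Lemma card_shared_private l :
  l \in B -> #|X l| <= #|shared_part l| + #|private_part l|.
Proof.
move=> lB; apply: leq_trans (leq_card_setU _ _); apply/subset_leq_card/subsetP.
move=> c cX; rewrite !inE cX andbT /=; case: (boolP (shared c)) => //= nsh.
apply/negP=> /bigcupP[l' /setD1P[l'l l'B] cXl']; apply/(negP nsh)/card_gt1P.
by exists l', l; rewrite !inE l'B lB cX cXl'.
Qed.

Lemma card_cover_private (B' : {set I}) l :
  B' \subset B :\ l -> l \in B ->
  #|\bigcup_(l' in B') X l'| + #|private_part l| <= #|\bigcup_(l' in B) X l'|.
Proof.
move=> sB' lB; rewrite -cardsUI.
have -> : (\bigcup_(l' in B') X l') :&: private_part l = set0.
  apply/setP=> c; rewrite /private_part !inE; apply/negbTE/negP.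
  case/andP=> /bigcupP[l' l'B' cX] /andP[/negP nU _]; apply: nU.
  by apply/bigcupP; exists l'; first exact: (subsetP sB').
rewrite cards0 addn0; apply/subset_leq_card; rewrite subUset.
rewrite (subset_trans (subsetDl _ _)) ?andbT; last exact: bigcup_sup.
by apply/bigcupsP=> l' /(subsetP sB') /setD1P[_ l'B]; apply: bigcup_sup.
Qed.

Lemma odd_shared_marriage_condition :
  (forall l, l \in B -> 3 <= #|shared_part l|) ->
  forall A' : {set T}, A' \subset odd_shared ->
  #|A'| <= \sum_(l in neighbours (fun c l => l \in occurrences c) A')
             (#|shared_part l| - 2).
Proof.
move=> shared3 A' sA'; rewrite -(leq_pmul2l (isT : 0 < 3)) big_distrr /=.
set N := neighbours _ A'.
have occ3 c : c \in A' -> 3 <= #|occurrences c|.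
  by move/(subsetP sA'); rewrite inE /shared; case: #|_| => [|[|[|]]].
have double_count : \sum_(c in A') #|occurrences c| =
    \sum_(l in N) #|[set c in A' | l \in occurrences c]|.
  rewrite (eq_bigr (fun c => \sum_(l in occurrences c) 1)) => [|c _]; last first.
    by rewrite sum1_card.
  rewrite (exchange_big_dep (mem N)) /= => [|c l cA' lc]; last first.
    exact: mem_neighbours cA' lc.
  by apply: eq_bigr => l _; rewrite sum1dep_card.
rewrite mulnC -sum_nat_const.
apply: leq_trans (_ : _ <= \sum_(c in A') #|occurrences c|) _; first exact: leq_sum.
rewrite double_count; apply: leq_sum => l.
rewrite inE => /existsP[c /andP[_]]; rewrite inE => /andP[lB _].
apply: leq_trans (_ : _ <= #|shared_part l|) _; last by have := shared3 l lB; lia.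
apply/subset_leq_card/subsetP=> c'; rewrite !inE => /andP[/(subsetP sA')].
by rewrite inE => /andP[-> _] /andP[_ ->].
Qed.

Theorem even_subfamily_of_shared :
  (forall l, l \in B -> 3 <= #|shared_part l|) -> even_subfamily.
Proof.
move=> shared3; have [B0 | [l0 _]] := set_0Vmem B.
  exists (fun=> set0); split=> [l | c]; first by rewrite B0 inE.
  rewrite (_ : [set l in B | _] = set0) ?cards0 //.
  by apply/setP=> l; rewrite !inE andbF.
have [f f_occ f_cap] :=
  @hall_capacity _ _ l0 _ _ _ (odd_shared_marriage_condition shared3).
pose moved l := [set c in odd_shared | f c == l].
exists (fun l => shared_part l :\: moved l); split=> [l lB | c].
  split; first by apply/subsetP=> c; rewrite !inE => /and3P[].
  rewrite cardsD; have := subset_leq_card (subsetIr (shared_part l) (moved l)).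
  by have := f_cap l; have := shared3 l lB; rewrite -/(moved l); lia.
have [shc | nshc] := boolP (shared c); last first.
  rewrite (_ : [set l in B | _] = set0) ?cards0 //.
  by apply/setP=> l; rewrite !inE (negbTE nshc) !andbF.
have occY : [set l in B | c \in shared_part l :\: moved l] =
    occurrences c :\: (if odd #|occurrences c| then [set f c] else set0).
  apply/setP=> l; rewrite !inE shc andbT /=.
  by case: (odd #|occurrences c|); rewrite ?inE //= [f c == l]eq_sym andbCA.
rewrite occY; case: ifPn => [oddc | evenc]; last by rewrite setD0.
have fc_occ : f c \in occurrences c by apply: f_occ; rewrite inE shc.
by move: oddc; rewrite (cardsD1 (f c)) fc_occ.
Qed.

Lemma private_or_even_subfamily :
  even_subfamily \/ exists2 l, l \in B & #|X l| <= #|private_part l| + 2.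
Proof.
case: (boolP [exists l in B, #|shared_part l| < 3]) => [|/existsPn big].
  case/existsP=> l /andP[lB small]; right; exists l => //.
  by have := card_shared_private lB; lia.
by left; apply: even_subfamily_of_shared => l lB; move: (big l); rewrite lB /= -leqNgt.
Qed.

Lemma even_subfamily_card l0 : even_subfamily -> l0 \in B -> 1 < #|B|.
Proof.
move=> [Y [YX Yeven]] l0B.
have /set0Pn[c cY] : Y l0 != set0.
  by rewrite -card_gt0; have := (YX l0 l0B).2; lia.
have := Yeven c; set S := [set l in B | c \in Y l] => evenS.
have S_gt1 : 1 < #|S|.
  have : 0 < #|S| by rewrite card_gt0; apply/set0Pn; exists l0; rewrite inE l0B cY.
  by move: evenS; case: #|S| => [|[|]].
apply: leq_trans S_gt1 (subset_leq_card _).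
by apply/subsetP=> l; rewrite inE => /andP[].
Qed.

End SharedElements.

Section Segments.
Variables (T : finType) (n k : nat) (X : 'I_n -> {set T}).
Hypotheses (k_gt0 : 0 < k) (card_X : forall l, #|X l| = k).

Definition segment a b := [set l : 'I_n | a <= l < b].
Definition segment_cover a b := \bigcup_(l in segment a b) X l.
Definition has_even_interval a b := exists i j : 'I_n,
  [/\ a <= i, i < j & j < b] /\ even_subfamily X [set l : 'I_n | i <= l <= j].

Lemma has_even_interval_widen a b a' b' :
  a' <= a -> b <= b' -> has_even_interval a b -> has_even_interval a' b'.
Proof.
by move=> a'a bb' [i [j [[ai ij jb] ev]]]; exists i, j; split=> //; split; lia.
Qed.

Lemma segment_even_interval a b :
  a < b -> b <= n -> even_subfamily X (segment a b) -> has_even_interval a b.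
Proof.
move=> ab bn ev; have an : a < n by lia.
have /card_gt1P[l1 [l2 [l1B l2B l1l2]]] : 1 < #|segment a b|.
  by apply: (even_subfamily_card (l0 := Ordinal an) ev); rewrite inE /= leqnn.
have b_gt : a.+1 < b.
  have : nat_of_ord l1 != l2 by [].
  by move: l1B l2B; rewrite !inE; lia.
have bn' : b.-1 < n by lia.
exists (Ordinal an), (Ordinal bn'); split; first by split=> /=; lia.
rewrite (_ : [set l | _] = segment a b) //.
by apply/setP=> l; rewrite !inE /=; apply/idP/idP; lia.
Qed.

Lemma has_even_interval_or_short t a b : b <= n ->
  #|segment_cover a b| <= (k - 2) * t + (k - 1) ->
  has_even_interval a b \/ b - a < 2 ^ t.
Proof.
elim: t a b => [|t IH] a b bn cover_small; have [ab | ba] := ltnP a b;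
  try by right; rewrite (eqP (_ : b - a == 0)) ?expn_gt0 // subn_eq0.
  have an : a < n by lia.
  have : X (Ordinal an) \subset segment_cover a b.
    by apply: bigcup_sup; rewrite inE /= leqnn.
  by move/subset_leq_card; rewrite card_X; lia.
have [ev | [l lB priv]] := private_or_even_subfamily X (segment a b).
  by left; apply: segment_even_interval.
move: (lB); rewrite inE => /andP[al lb].
have side a' b' : a <= a' -> b' <= b -> b' <= l \/ l < a' ->
    #|segment_cover a' b'| <= (k - 2) * t + (k - 1).
  move=> aa' b'b hl.
  have sub : segment a' b' \subset segment a b :\ l.
    by apply/subsetP=> l'; rewrite !inE -val_eqE /=; lia.
  have := card_cover_private X sub lB; rewrite card_X in priv.
  by move: cover_small; rewrite /segment_cover mulnS; lia.
have al1 : a <= l.+1 := leq_trans al (leqnSn l).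
have [ev | short1] :=
  IH a l (ltnW (leq_trans lb bn)) (side _ _ (leqnn a) (ltnW lb) (or_introl (leqnn l))).
  by left; apply: has_even_interval_widen (leqnn a) (ltnW lb) ev.
have [ev | short2] := IH l.+1 b bn (side _ _ al1 (leqnn b) (or_intror (ltnSn l))).
  by left; apply: has_even_interval_widen al1 (leqnn b) ev.
by right; rewrite expnS; lia.
Qed.

End Segments.

Lemma INR_expn (m e : nat) : INR (m ^ e) = (INR m ^ e)%R.
Proof. by elim: e => [|e IH] //; rewrite expnS mult_INR IH. Qed.

Lemma expn_lt_of_log2 (s m n : nat) : 0 < n ->
  (INR s < INR m * log2 (INR n / 3))%R -> 3 ^ m * 2 ^ s < n ^ m.
Proof.
move=> n_gt0 hs; apply/ltP/INR_lt; rewrite mult_INR !INR_expn.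
have -> : INR 3 = 3%R by rewrite /INR; lra.
have -> : INR 2 = 2%R by rewrite /INR; lra.
have q_gt0 : (0 < INR n / 3)%R by apply: Rdiv_lt_0_compat; [apply/lt_0_INR/ltP | lra].
have ln2_gt0 : (0 < ln 2)%R by rewrite -ln_1; apply: ln_increasing; lra.
have pow2_lt : (2 ^ s < (INR n / 3) ^ m)%R.
  apply: ln_lt_inv; [apply: pow_lt; lra | exact: pow_lt |].
  rewrite !ln_pow //; last lra.
  have -> : (INR m * ln (INR n / 3) = INR m * log2 (INR n / 3) * ln 2)%R.
    by rewrite /log2; field; lra.
  exact: Rmult_lt_compat_r.
have -> : (INR n ^ m = 3 ^ m * (INR n / 3) ^ m)%R.
  by rewrite -Rpow_mult_distr (_ : (3 * (INR n / 3) = INR n)%R) //; field.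
by apply: Rmult_lt_compat_l => //; apply: pow_lt; lra.
Qed.

Theorem lemma3 (Sigma : finType) (k n : nat) (hk : 2 < k) (hn : 1 <= n)
  (X : 'I_n -> {set Sigma})
  (hX : forall l, #|X l| = k)
  (hS : (INR #|Sigma| < INR (k - 2) * log2 (INR n / 3))%R) :
  exists (i j : 'I_n), i < j /\
    exists Y : 'I_n -> {set Sigma},
      (forall l : 'I_n, i <= l <= j -> Y l \subset X l /\ 2 <= #|Y l|) /\
      (forall a : Sigma, ~~ odd #|[set l : 'I_n | (i <= l <= j) && (a \in Y l)]|).
Proof.
pose t := #|Sigma| %/ (k - 2).
have cover_small : #|segment_cover X 0 n| <= (k - 2) * t + (k - 1).
  by have := max_card (segment_cover X 0 n); rewrite /t; lia.
have k_gt0 : 0 < k by lia.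
have [[i [j [[_ ij _] [Y [YX Yeven]]]]] | short] :=
  has_even_interval_or_short k_gt0 hX (leqnn n) cover_small.
  exists i, j; split=> //; exists Y.
  split=> [l lij | c]; first by apply: YX; rewrite inE.
  rewrite (_ : [set l | _] = [set l in [set l : 'I_n | i <= l <= j] | c \in Y l]) //.
  by apply/setP=> l; rewrite !inE.
have short_pow : n ^ (k - 2) < 2 ^ (t * (k - 2)).
  by rewrite expnM ltn_exp2r ?subn0 // in short *; lia.
have t_small : 2 ^ (t * (k - 2)) <= 3 ^ (k - 2) * 2 ^ #|Sigma|.
  by rewrite (leq_trans _ (leq_pmull _ _)) ?expn_gt0 // leq_exp2l // leq_divM.
have := ltn_trans (expn_lt_of_log2 hn hS) short_pow.
by rewrite ltnNge t_small.
Qed.
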